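(* Consider the problem $\mathbf{x}^\star(t)=\arg\min_{\mathbf{x}\in\mathbb{R}^n} f_0(\mathbf{x},t)$ s.t. $f_i(\mathbf{x},t)\le0$, $i=1,\dots,p$, for $t\in[0,\infty)$, under Assumptions 1, 2, 3 below. Let $\mathbf{x}_0\in\mathbb{R}^n$ be arbitrary, let $s_0$ be given by $$s_0=\begin{cases}0 & \text{if } \max_i f_i(\mathbf{x}_0,0)\le 0,\\ \max_i f_i(\mathbf{x}_0,0)+\varepsilon & \text{if } \max_i f_i(\mathbf{x}_0,0)>0,\end{cases}$$ for some $\varepsilon>0$, and let $s(t)=s_0e^{-\alpha t}$ for some $\alpha>0$. Let $c:[0,\infty)\to(0,\infty)$ be continuously differentiable with $c(t)\to\infty$ as $t\to\infty$. Let $\mathbf{P}\in\mathbb{S}^n_{++}$ with $\mathbf{P}\succeq\sigma\mathbf{I}_n$, $\sigma>0$, and let $\tilde{\mathbf{z}}(t)$ solve $$\dot{\tilde{\mathbf{z}}}(t)=-\nabla_{\mathbf{x}\mathbf{x}}\tilde\Phi(\tilde{\mathbf{z}}(t),t)^{-1}\big(\mathbf{P}\nabla_{\mathbf{x}}\tilde\Phi(\tilde{\mathbf{z}}(t),t)+\nabla_{\mathbf{x}t}\tilde\Phi(\tilde{\mathbf{z}}(t),t)\big),\qquad\tilde{\mathbf{z}}(0)=\mathbf{x}_0,$$ where $\tilde\Phi(\mathbf{x},t)=f_0(\mathbf{x},t)-\frac{1}{c(t)}\sum_{i=1}^p\log(s(t)-f_i(\mathbf{x},t))$ on $\tilde{\mathcal{D}}(t)=\{\mathbf{x}: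 f_i(\mathbf{x},t)<s(t),\ i=1,\dots,p\}$. Then $\tilde{\mathbf{z}}(t)-\mathbf{x}^\star(t)\to 0$ as $t\to\infty$.
   Context: Assumption 1: $f_0(\mathbf{x},t)$ and $f_i(\mathbf{x},t)$, $i=1,\dots,p$, are twice continuously differentiable in $\mathbf{x}$ and continuously differentiable in $t$ for $t\ge0$; $\nabla_{\mathbf{x}\mathbf{x}} f_0(\mathbf{x},t)\succeq m\mathbf{I}$ for some $m>0$; each $f_i(\cdot,t)$ is convex for all $t\ge0$. Assumption 2 (Slater): there exists $\mathbf{x}^\dagger\in\mathbb{R}^n$ with $f_i(\mathbf{x}^\dagger,t)<0$ for all $i$ and all $t\ge0$. Optimal dual variables $\lambda^\star(t)=(\lambda_1^\star(t),\dots,\lambda_p^\star(t))$ satisfy with $\mathbf{x}^\star(t)$ the KKT conditions: $\nabla_{\mathbf{x}} f_0(\mathbf{x}^\star(t),t)+\sum_i\lambda_i^\star(t)\nabla_{\mathbf{x}} f_i(\mathbf{x}^\star(t),t)=0$, $\lambda_i^\star(t)f_i(\mathbf{x}^\star(t),t)=0$, $\lambda_i^\star(t)\ge0$, $f_i(\mathbf{x}^\star(t),t)\le0$. Assumption 3: for every $\alpha>0$, $\lambda_i^\star(t)e^{-\alpha t}\to0$ as $t\to\infty$ for all $i$. The solution $\tilde{\mathbf{z}}(t)$ is assumed to exist and remain in $\tilde{\mathcal{D}}(t)$ for all $t\ge0$. *)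

From Stdlib Require Import Reals.
From mathcomp Require Import ssreflect ssrfun ssrbool eqtype ssrnat fintype bigop.
Set Implicit Arguments. Unset Strict Implicit.
Open Scope R_scope.

Definition vec (n : nat) := 'I_n -> R.

Definition isum {n : nat} (F : 'I_n -> R) : R := \big[Rplus/0]_(i < n) F i.

Definition setc {n : nat} (x : vec n) (i : 'I_n) (y : R) : vec n :=
  fun j => if j == i then y else x j.

Definition near {n : nat} (x y : vec n) (d : R) : Prop :=
  forall i, Rabs (y i - x i) < d.

Definition pd {n : nat} (F : vec n -> R) (i : 'I_n) (x : vec n) (l : R) : Prop :=
  derivable_pt_lim (fun y => F (setc x i y)) (x i) l.

Definition grad {n : nat} (F : vec n -> R) (x : vec n) (g : vec n) : Prop :=
  forall i, pd F i x (g i).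

Definition hess {n : nat} (F : vec n -> R) (x : vec n) (H : 'I_n -> 'I_n -> R) : Prop :=
  exists (DF : 'I_n -> vec n -> R) (d : R), 0 < d /\
    (forall j y, near x y d -> pd F j y (DF j y)) /\
    (forall i j, pd (DF j) i x (H i j)).

Definition dxt {n : nat} (Phi : vec n -> R -> R) (x : vec n) (t : R) (m : vec n) : Prop :=
  exists (G : 'I_n -> R -> R) (d : R), 0 < d /\
    (forall j s, Rabs (s - t) < d -> pd (fun y => Phi y s) j x (G j s)) /\
    (forall j, derivable_pt_lim (G j) t (m j)).

Definition jcont {n : nat} (F : vec n -> R -> R) : Prop :=
  forall x t, 0 <= t -> forall e, 0 < e -> exists d, 0 < d /\
    forall y s, 0 <= s -> near x y d -> Rabs (s - t) < d -> Rabs (F y s - F x t) < e.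

(* Assumption 1 regularity: twice continuously differentiable in x, continuously
   differentiable in t, for t >= 0 (via continuous partial derivatives; the
   t-derivative is required for t > 0 and to extend continuously to t = 0). *)
Definition C2x_C1t {n : nat} (F : vec n -> R -> R) : Prop :=
  exists (DF : 'I_n -> vec n -> R -> R) (D2F : 'I_n -> 'I_n -> vec n -> R -> R)
         (DtF : vec n -> R -> R),
    (forall x t i, 0 <= t -> pd (fun y => F y t) i x (DF i x t)) /\
    (forall x t i j, 0 <= t -> pd (fun y => DF j y t) i x (D2F i j x t)) /\
    (forall x t, 0 < t -> derivable_pt_lim (fun s => F x s) t (DtF x t)) /\
    jcont F /\ (forall i, jcont (DF i)) /\ (forall i j, jcont (D2F i j)) /\
    jcont DtF.

Definition qform {n : nat} (A : 'I_n -> 'I_n -> R) (v : vec n) : R :=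
  isum (fun i => isum (fun j => v i * A i j * v j)).
Definition sqnorm {n : nat} (v : vec n) : R := isum (fun i => v i * v i).

Definition convex_fun {n : nat} (F : vec n -> R) : Prop :=
  forall x y (l : R), 0 <= l <= 1 ->
    F (fun k => l * x k + (1 - l) * y k) <= l * F x + (1 - l) * F y.

Definition is_argmin {n p : nat} (f0 : vec n -> R -> R) (fc : 'I_p -> vec n -> R -> R)
    (t : R) (x : vec n) : Prop :=
  (forall i, fc i x t <= 0) /\
  (forall y, (forall i, fc i y t <= 0) -> f0 x t <= f0 y t).

Definition Phit {n p : nat} (f0 : vec n -> R -> R) (fc : 'I_p -> vec n -> R -> R)
    (c s : R -> R) (x : vec n) (t : R) : R :=
  f0 x t - / c t * isum (fun i => ln (s t - fc i x t)).

(* Let g(t) be the barrier gradient grad_x Phi~(z(t), t).  The chain rule and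
   the ODE give g' = - P g, so |g(t)|^2 decays like exp (-2 sigma t).  At each
   time, strong convexity of f0 between z(t) and the KKT point x*(t), convexity
   of the constraints and complementary slackness give
     m |z - x*|^2 <= <g, z - x*> + p / c(t) + s(t) sum_i lam_i(t),
   since every barrier term is at most 1 / c(t) and every multiplier term at
   most s(t) lam_i(t).  Young's inequality absorbs <g, z - x*>, and the three
   remaining terms vanish because |g| decays, c -> oo and s(t) lam_i(t) -> 0
   (Assumption 3). *)

From Stdlib Require Import Reals Lra FunctionalExtensionality IndefiniteDescription Classical.
From HB Require Import structures.
From mathcomp Require Import ssreflect ssrfun ssrbool eqtype ssrnat seq fintype bigop.
From Coquelicot Require Coquelicot.
Set Implicit Arguments. Unset Strict Implicit.
Open Scope R_scope.

HB.instance Definition _ := Monoid.isComLaw.Build R 0 Rplus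
  (fun a b c => esym (Rplus_assoc a b c)) Rplus_comm Rplus_0_l.

Section FiniteSums.
Context {n : nat}.
Implicit Types f g : 'I_n -> R.

Lemma isum_ext f g : (forall i, f i = g i) -> isum f = isum g.
Proof. by move=> H; rewrite /isum; apply: eq_bigr. Qed.

Lemma isumD f g : isum (fun i => f i + g i) = isum f + isum g.
Proof. by rewrite /isum big_split. Qed.

Lemma isum_mul_l a f : isum (fun i => a * f i) = a * isum f.
Proof.
rewrite /isum; elim/big_rec2: _ => [|i y1 y2 _ ->]; first by rewrite Rmult_0_r.
by rewrite Rmult_plus_distr_l.
Qed.

Lemma isum_mul_r f a : isum f * a = isum (fun i => f i * a).
Proof. by rewrite Rmult_comm -isum_mul_l; apply: isum_ext => i; ring. Qed.

Lemma isumN f : isum (fun i => - f i) = - isum f.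
Proof.
rewrite (@isum_ext (fun i => - f i) (fun i => (-1) * f i)); last by move=> i; ring.
by rewrite isum_mul_l; ring.
Qed.

Lemma isumB f g : isum (fun i => f i - g i) = isum f - isum g.
Proof. by rewrite /Rminus isumD isumN. Qed.

Lemma isum_le f g : (forall i, f i <= g i) -> isum f <= isum g.
Proof.
move=> H; rewrite /isum; elim/big_rec2: _ => [|i y1 y2 _ Hy]; first lra.
exact: Rplus_le_compat.
Qed.

Lemma isum_const a : isum (fun _ : 'I_n => a) = INR n * a.
Proof.
rewrite /isum big_const card_ord.
elim: n => [|k IH] /=; first ring.
by rewrite IH; case: k {IH} => [|k] /=; ring.
Qed.

Lemma isum_ge0 f : (forall i, 0 <= f i) -> 0 <= isum f.
Proof. by move=> H; have := @isum_le (fun _ => 0) f H; rewrite isum_const Rmult_0_r. Qed.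

Lemma isum_ge_term f i : (forall j, 0 <= f j) -> f i <= isum f.
Proof.
move=> H; rewrite /isum (bigD1 i) //=.
set S := bigop _ _ _.
have : 0 <= S by rewrite /S; elim/big_rec: _ => [|j y _ Hy]; [lra | have := H j; lra].
lra.
Qed.

Lemma Rabs_isum f : Rabs (isum f) <= isum (fun i => Rabs (f i)).
Proof.
rewrite /isum; elim/big_rec2: _ => [|i y1 y2 _ Hy]; first by rewrite Rabs_R0; lra.
by apply: Rle_trans (Rabs_triang _ _) _; lra.
Qed.

(* the slack [+ 1] keeps the bound strict even when [n = 0] *)
Lemma Rabs_isum_lt f e : 0 < e -> (forall i, Rabs (f i) <= e / (INR n + 1)) ->
  Rabs (isum f) < e.
Proof.
move=> He H; have Hn := pos_INR n.
apply: Rle_lt_trans (Rabs_isum f) _.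
apply: Rle_lt_trans (isum_le H) _.
rewrite isum_const.
apply: (Rmult_lt_reg_r (INR n + 1)); first lra.
by field_simplify; [nra | lra].
Qed.

Lemma derivable_pt_lim_isum (F : 'I_n -> R -> R) (l : 'I_n -> R) x :
  (forall i, derivable_pt_lim (F i) x (l i)) ->
  derivable_pt_lim (fun y => isum (fun i => F i y)) x (isum l).
Proof.
move=> H; rewrite /isum; elim: (index_enum _) => [|a r IH].
  have -> : (fun y => \big[Rplus/0]_(i <- [::]) F i y) = fun _ => 0.
    by apply: functional_extensionality => y; rewrite big_nil.
  by rewrite big_nil; apply: derivable_pt_lim_const.
have -> : (fun y => \big[Rplus/0]_(i <- a :: r) F i y) =
          fun y => F a y + \big[Rplus/0]_(i <- r) F i y.
  by apply: functional_extensionality => y; rewrite big_cons.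
by rewrite big_cons; apply: derivable_pt_lim_plus.
Qed.

End FiniteSums.

Lemma isum_swap n m (F : 'I_n -> 'I_m -> R) :
  isum (fun i => isum (fun j => F i j)) = isum (fun j => isum (fun i => F i j)).
Proof. by rewrite /isum exchange_big. Qed.

Lemma ord_uniform_delta n (P : 'I_n -> R -> Prop) :
  (forall i d d', 0 < d' <= d -> P i d -> P i d') ->
  (forall i, exists d, 0 < d /\ P i d) -> exists d, 0 < d /\ forall i, P i d.
Proof.
move=> Hmono H.
suff [d [Hd Hr]] : exists d, 0 < d /\ forall i, i \in enum 'I_n -> P i d.
  by exists d; split => // i; apply: Hr; rewrite mem_enum.
elim: (enum 'I_n) => [|a r [d [Hd Hr]]]; first by exists 1; split => //; lra.
have [da [Hda Pa]] := H a.
have Hm : 0 < Rmin d da by apply: Rmin_pos.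
exists (Rmin d da); split => // i; rewrite in_cons => /orP [/eqP -> | Hi].
  by apply: (Hmono a da) => //; split => //; apply: Rmin_r.
by apply: (Hmono i d); [split => //; apply: Rmin_l | apply: Hr].
Qed.

Lemma ord_uniform_threshold n (P : 'I_n -> R -> Prop) :
  (forall i T T', T <= T' -> P i T -> P i T') ->
  (forall i, exists T, P i T) -> exists T, forall i, P i T.
Proof.
move=> Hmono H.
suff [T Hr] : exists T, forall i, i \in enum 'I_n -> P i T.
  by exists T => i; apply: Hr; rewrite mem_enum.
elim: (enum 'I_n) => [|a r [T Hr]]; first by exists 0.
have [Ta Pa] := H a.
exists (Rmax T Ta) => i; rewrite in_cons => /orP [/eqP -> | Hi].
  by apply: (Hmono a Ta) => //; apply: Rmax_r.
by apply: (Hmono i T); [apply: Rmax_l | apply: Hr].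
Qed.

Section CoordinateUpdate.
Context {n : nat}.
Implicit Types x y : vec n.

Lemma setc_id x i : setc x i (x i) = x.
Proof. by apply: functional_extensionality => j; rewrite /setc; case: eqP => [->|]. Qed.

Lemma setc_setc x i a b : setc (setc x i a) i b = setc x i b.
Proof. by apply: functional_extensionality => j; rewrite /setc; case: eqP. Qed.

Lemma setcC x i j a b : i <> j -> setc (setc x i a) j b = setc (setc x j b) i a.
Proof.
move=> Hij; apply: functional_extensionality => k; rewrite /setc.
case: (k =P j) => [Hkj|Hkj]; case: (k =P i) => [Hki|Hki] //.
by exfalso; apply: Hij; rewrite -Hki -Hkj.
Qed.

Lemma setc_eq x i a : setc x i a i = a.
Proof. by rewrite /setc eqxx. Qed.

Lemma setc_neq x i j a : j <> i -> setc x i a j = x j.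
Proof. by rewrite /setc => /eqP /negbTE ->. Qed.

Lemma near_le x y d d' : d <= d' -> near x y d -> near x y d'.
Proof. by move=> H Hn i; have := Hn i; lra. Qed.

Lemma near_refl x d : 0 < d -> near x x d.
Proof. by move=> H i; rewrite Rminus_diag Rabs_R0. Qed.

Lemma near_setc x i a d : 0 < d -> Rabs (a - x i) < d -> near x (setc x i a) d.
Proof.
move=> Hd Ha j; rewrite /setc; case: (j =P i) => [->|_] //.
by rewrite Rminus_diag Rabs_R0.
Qed.

End CoordinateUpdate.

Lemma derivable_pt_lim_val f x l l' :
  derivable_pt_lim f x l -> l = l' -> derivable_pt_lim f x l'.
Proof. by move=> H <-. Qed.

Lemma derivable_pt_lim_local f g x l d : 0 < d ->
  (forall y, Rabs (y - x) < d -> f y = g y) ->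
  derivable_pt_lim f x l -> derivable_pt_lim g x l.
Proof.
move=> Hd Heq H e He; have [del Hdel] := H e He.
have Hp : 0 < Rmin del d by apply: Rmin_pos => //; apply: cond_pos.
exists (mkposreal _ Hp) => h Hh0 Hh /=.
have H1 : Rabs h < del by apply: Rlt_le_trans Hh (Rmin_l _ _).
have H2 : Rabs h < d by apply: Rlt_le_trans Hh (Rmin_r _ _).
rewrite -!Heq; first exact: Hdel.
- by rewrite Rminus_diag Rabs_R0.
- by have -> : x + h - x = h by ring.
Qed.

Lemma derivable_pt_lim_mul_const f x l a :
  derivable_pt_lim f x l -> derivable_pt_lim (fun y => f y * a) x (l * a).
Proof.
move=> H; apply: derivable_pt_lim_val
  (derivable_pt_lim_mult f (fun _ => a) x _ _ H (derivable_pt_lim_const _ _)) _.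
ring.
Qed.

Lemma derivable_pt_lim_exp_lin a x :
  derivable_pt_lim (fun u => exp (a * u)) x (exp (a * x) * a).
Proof.
apply: (derivable_pt_lim_comp (fun u => a * u) exp).
- by apply: derivable_pt_lim_val (derivable_pt_lim_scal id a x 1 (derivable_pt_lim_id x)) _; ring.
- exact: derivable_pt_lim_exp.
Qed.

Lemma derivable_pt_lim_continuity_pt f x l :
  derivable_pt_lim f x l -> continuity_pt f x.
Proof. by move=> H; apply: derivable_continuous_pt; exists l. Qed.

Lemma continuity_pt_ball h t : continuity_pt h t -> forall e, 0 < e ->
  exists d, 0 < d /\ forall s, Rabs (s - t) < d -> Rabs (h s - h t) < e.
Proof.
move=> H e He; have [a [Ha Ha']] := H e He.
exists a; split => // s Hs; case: (Req_dec s t) => [->|Hst].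
  by rewrite Rminus_diag Rabs_R0.
by apply: (Ha' s); split; first by split => //; auto.
Qed.

Lemma MVT_between f f' a b :
  (forall c, Rmin a b <= c <= Rmax a b -> derivable_pt_lim f c (f' c)) ->
  exists c, Rmin a b <= c <= Rmax a b /\ f b - f a = f' c * (b - a).
Proof.
move=> H; case: (Rtotal_order a b) => [Hab|[Hab|Hab]].
- rewrite Rmin_left ?Rmax_right in H *; try lra.
  have [c [Hc1 Hc2]] := MVT_cor2 f f' a b Hab H.
  by exists c; split => //; lra.
- by subst; exists b; split; [split; [apply: Rmin_l | apply: Rmax_l] | ring].
- rewrite Rmin_right ?Rmax_left in H *; try lra.
  have [c [Hc2 Hc1]] := MVT_cor2 f f' b a Hab H.
  by exists c; split; [lra | lra].
Qed.

Lemma Rabs_between a b c : Rmin a b <= c <= Rmax a b -> Rabs (c - a) <= Rabs (b - a).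
Proof.
rewrite /Rmin /Rmax; case: (Rle_dec a b) => H [H1 H2];
  rewrite /Rabs; repeat case: Rcase_abs; lra.
Qed.

Lemma Rabs_mult_approx a b a0 b0 eta : 0 < eta <= 1 ->
  Rabs (a - a0) < eta -> Rabs (b - b0) < eta ->
  Rabs (a * b - a0 * b0) <= eta * (1 + Rabs a0 + Rabs b0).
Proof.
move=> He Ha Hb.
have -> : a * b - a0 * b0 = (a - a0) * (b - b0) + (a0 * (b - b0) + b0 * (a - a0)) by ring.
apply: Rle_trans (Rabs_triang _ _) _.
apply: Rle_trans (Rplus_le_compat_l _ _ _ (Rabs_triang _ _)) _.
rewrite !Rabs_mult.
have := Rabs_pos (a - a0); have := Rabs_pos (b - b0); have := Rabs_pos a0;
  have := Rabs_pos b0; nra.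
Qed.

Lemma Rabs_inv_approx a a0 e : 0 < e -> 0 < Rabs a0 ->
  Rabs (a - a0) < Rabs a0 / 2 -> Rabs (a - a0) < e * Rabs a0 * Rabs a0 / 2 ->
  Rabs (/ a - / a0) < e.
Proof.
move=> He HA H1 H2.
have Hq : Rabs a0 / 2 < Rabs a.
  have := Rabs_triang_inv a0 a; rewrite Rabs_minus_sym; lra.
have Ha0 : a0 <> 0 by move=> E; rewrite E Rabs_R0 in HA; lra.
have Ha : a <> 0 by move=> E; rewrite E Rabs_R0 in Hq; lra.
have -> : / a - / a0 = (a0 - a) / (a * a0) by field.
rewrite /Rdiv Rabs_mult Rabs_inv Rabs_mult (Rabs_minus_sym a0).
apply: (Rmult_lt_reg_r (Rabs a * Rabs a0)); first nra.
rewrite Rmult_assoc Rinv_l; last nra.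
have : e * Rabs a0 * (Rabs a0 / 2) < e * Rabs a0 * Rabs a.
  by apply: Rmult_lt_compat_l => //; nra.
nra.
Qed.

Section JointContinuity.
Context {n : nat}.
Implicit Types (F G : vec n -> R -> R) (x : vec n).

Definition vcont_at (F : vec n -> R) x : Prop :=
  forall e, 0 < e -> exists d, 0 < d /\ forall y, near x y d -> Rabs (F y - F x) < e.

Definition jcont_at F x t : Prop :=
  forall e, 0 < e -> exists d, 0 < d /\
    forall y s, near x y d -> Rabs (s - t) < d -> Rabs (F y s - F x t) < e.

Lemma vcont_at_of_jcont F t x : jcont F -> 0 <= t -> vcont_at (fun y => F y t) x.
Proof.
move=> H Ht e He; have [d [Hd Hd']] := H x t Ht e He.
by exists d; split => // y Hy; apply: Hd' => //; rewrite Rminus_diag Rabs_R0.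
Qed.

Lemma jcont_at_of_jcont F x t : jcont F -> 0 < t -> jcont_at F x t.
Proof.
move=> H Ht e He; have [d [Hd Hd']] := H x t (Rlt_le _ _ Ht) e He.
exists (Rmin d t); split; first exact: Rmin_pos.
move=> y s Hy Hs; have := Rmin_l d t; have := Rmin_r d t => Ht' Hd''.
apply: Hd'; [| exact: near_le Hy | lra].
by have := Rabs_def2 _ _ (Rlt_le_trans _ _ _ Hs Ht'); lra.
Qed.

Lemma jcont_at_static (F : vec n -> R) x t : vcont_at F x -> jcont_at (fun y _ => F y) x t.
Proof.
by move=> H e He; have [d [Hd Hd']] := H e He; exists d; split => // y s Hy _; apply: Hd'.
Qed.

Lemma jcont_at_time (h : R -> R) x t : continuity_pt h t -> jcont_at (fun _ s => h s) x t.
Proof.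
move=> H e He; have [d [Hd Hd']] := continuity_pt_ball H He.
by exists d; split => // y s _ Hs; apply: Hd'.
Qed.

Lemma jcont_at_plus F G x t :
  jcont_at F x t -> jcont_at G x t -> jcont_at (fun y s => F y s + G y s) x t.
Proof.
move=> HF HG e He.
have [d1 [Hd1 H1]] := HF (e / 2) ltac:(lra).
have [d2 [Hd2 H2]] := HG (e / 2) ltac:(lra).
exists (Rmin d1 d2); split; first exact: Rmin_pos.
move=> y s Hy Hs; have A1 := Rmin_l d1 d2; have A2 := Rmin_r d1 d2.
have B1 := H1 y s (near_le A1 Hy) ltac:(lra).
have B2 := H2 y s (near_le A2 Hy) ltac:(lra).
have -> : F y s + G y s - (F x t + G x t) = (F y s - F x t) + (G y s - G x t) by ring.
by apply: Rle_lt_trans (Rabs_triang _ _) _; lra.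
Qed.

Lemma jcont_at_opp F x t : jcont_at F x t -> jcont_at (fun y s => - F y s) x t.
Proof.
move=> HF e He; have [d [Hd H]] := HF e He; exists d; split => // y s Hy Hs.
have -> : - F y s - - F x t = - (F y s - F x t) by ring.
by rewrite Rabs_Ropp; apply: H.
Qed.

Lemma jcont_at_mult F G x t :
  jcont_at F x t -> jcont_at G x t -> jcont_at (fun y s => F y s * G y s) x t.
Proof.
move=> HF HG e He.
set K := 1 + Rabs (F x t) + Rabs (G x t).
have HK : 0 < K by rewrite /K; have := Rabs_pos (F x t); have := Rabs_pos (G x t); lra.
set eta := Rmin 1 (e / (2 * K)).
have He1 : 0 < e / (2 * K) by apply: Rdiv_lt_0_compat; lra.
have Heta : 0 < eta by apply: Rmin_pos; lra.
have Heta1 : eta <= e / (2 * K) by apply: Rmin_r.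
have [d1 [Hd1 H1]] := HF eta Heta.
have [d2 [Hd2 H2]] := HG eta Heta.
exists (Rmin d1 d2); split; first exact: Rmin_pos.
move=> y s Hy Hs; have A1 := Rmin_l d1 d2; have A2 := Rmin_r d1 d2.
have := Rabs_mult_approx (conj Heta (Rmin_l _ _)) (H1 y s (near_le A1 Hy) ltac:(lra))
  (H2 y s (near_le A2 Hy) ltac:(lra)).
have : eta * K <= e / (2 * K) * K by apply: Rmult_le_compat_r; lra.
have -> : e / (2 * K) * K = e / 2 by field; lra.
rewrite -/K; lra.
Qed.

Lemma jcont_at_inv F x t :
  F x t <> 0 -> jcont_at F x t -> jcont_at (fun y s => / F y s) x t.
Proof.
move=> H0 HF e He.
have HA : 0 < Rabs (F x t) by apply: Rabs_pos_lt.
set eta := Rmin (Rabs (F x t) / 2) (e * Rabs (F x t) * Rabs (F x t) / 2).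
have Heta : 0 < eta.
  by apply: Rmin_pos; [lra | apply: Rdiv_lt_0_compat; [apply: Rmult_lt_0_compat; nra | lra]].
have [d [Hd H]] := HF eta Heta.
exists d; split => // y s Hy Hs; have B := H y s Hy Hs.
by apply: Rabs_inv_approx => //; apply: Rlt_le_trans B _; [apply: Rmin_l | apply: Rmin_r].
Qed.

Lemma jcont_at_isum m (F : 'I_m -> vec n -> R -> R) x t :
  (forall i, jcont_at (F i) x t) -> jcont_at (fun y s => isum (fun i => F i y s)) x t.
Proof.
move=> H e He.
have Hm : 0 < INR m + 1 by have := pos_INR m; lra.
have Heta : 0 < e / 2 / (INR m + 1) by apply: Rdiv_lt_0_compat; lra.
have [d [Hd Hd']] := ord_uniform_delta (P := fun i d => forall y s, near x y d ->
   Rabs (s - t) < d -> Rabs (F i y s - F i x t) < e / 2 / (INR m + 1))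
   (fun i d d' Hdd Hi y s Hy Hs => Hi y s (near_le (proj2 Hdd) Hy) ltac:(lra))
   (fun i => H i _ Heta).
exists d; split => // y s Hy Hs; rewrite -isumB.
have : Rabs (isum (fun i => F i y s - F i x t)) < e / 2.
  by apply: Rabs_isum_lt; [lra | move=> i; left; apply: Hd'].
lra.
Qed.

End JointContinuity.

Section ChainRule.
Context {n : nat}.
Implicit Types x w : vec n.

Definition splice x w (k : nat) : vec n := fun j => if (j < k)%N then w j else x j.

Lemma splice0 x w : splice x w 0 = x.
Proof. by apply: functional_extensionality. Qed.

Lemma splice_all x w : splice x w n = w.
Proof. by apply: functional_extensionality => j; rewrite /splice ltn_ord. Qed.

Lemma splice_at x w (k : 'I_n) : splice x w k k = x k.
Proof. by rewrite /splice ltnn. Qed.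

Lemma spliceS x w (k : 'I_n) : splice x w k.+1 = setc (splice x w k) k (w k).
Proof.
apply: functional_extensionality => j; rewrite /splice /setc ltnS leq_eqVlt.
case: (j =P k) => [->|Hjk]; first by rewrite eqxx.
suff /negbTE -> : nat_of_ord j != nat_of_ord k by [].
by apply/eqP => E; apply: Hjk; apply: val_inj.
Qed.

Lemma near_splice x w (k : 'I_n) c d : near x w d ->
  Rmin (x k) (w k) <= c <= Rmax (x k) (w k) -> near x (setc (splice x w k) k c) d.
Proof.
move=> Hw Hc j; rewrite /setc; case: (j =P k) => [->|_].
  exact: Rle_lt_trans (Rabs_between Hc) (Hw k).
rewrite /splice; case: (j < k)%N; first exact: Hw.
by rewrite Rminus_diag Rabs_R0; have := Hw j; have := Rabs_pos (w j - x j); lra.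
Qed.

Lemma telescope_coords (F : vec n -> R) x w :
  F w - F x = isum (fun k : 'I_n => F (splice x w k.+1) - F (splice x w k)).
Proof.
have Htel N : \big[Rplus/0]_(0 <= k < N) (F (splice x w k.+1) - F (splice x w k)) =
    F (splice x w N) - F (splice x w 0).
  elim: N => [|N IH]; first by rewrite big_geq //; ring.
  by rewrite big_nat_recr //= IH; ring.
by rewrite /isum -(big_mkord xpredT (fun k => F (splice x w k.+1) - F (splice x w k)))
  Htel splice0 splice_all.
Qed.

Lemma coord_mvt (F DF : vec n -> R) (y : vec n) k a :
  (forall c, Rmin (y k) a <= c <= Rmax (y k) a -> pd F k (setc y k c) (DF (setc y k c))) ->
  exists c, Rmin (y k) a <= c <= Rmax (y k) a /\
    F (setc y k a) - F y = DF (setc y k c) * (a - y k).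
Proof.
move=> H.
have [c [Hc Ec]] : exists c, Rmin (y k) a <= c <= Rmax (y k) a /\
    F (setc y k a) - F (setc y k (y k)) = DF (setc y k c) * (a - y k).
  apply: (MVT_between (f := fun v => F (setc y k v)) (f' := fun v => DF (setc y k v))).
  move=> c Hc; have := H c Hc; rewrite /pd setc_eq.
  by have -> : (fun v => F (setc (setc y k c) k v)) = (fun v => F (setc y k v))
    by apply: functional_extensionality => v; rewrite setc_setc.
by exists c; rewrite setc_id in Ec.
Qed.

Lemma splice_step_quotient (F DkF : vec n -> R) x w (k : 'I_n) h D0 q0 tol :
  h <> 0 -> 0 < tol <= 1 ->
  (forall c, Rmin (x k) (w k) <= c <= Rmax (x k) (w k) ->
     pd F k (setc (splice x w k) k c) (DkF (setc (splice x w k) k c)) /\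
     Rabs (DkF (setc (splice x w k) k c) - D0) < tol) ->
  Rabs ((w k - x k) / h - q0) < tol ->
  Rabs ((F (splice x w k.+1) - F (splice x w k)) / h - D0 * q0) <=
    tol * (1 + Rabs D0 + Rabs q0).
Proof.
move=> Hh Htol H Hq.
have [c [Hc Ec]] := coord_mvt (F := F) (DF := DkF) (y := splice x w k) (k := k) (a := w k)
  (fun c Hc => proj1 (H c ltac:(by rewrite -(splice_at x w k)))).
rewrite splice_at -spliceS in Hc Ec; rewrite Ec.
have -> : DkF (setc (splice x w k) k c) * (w k - x k) / h =
          DkF (setc (splice x w k) k c) * ((w k - x k) / h) by field.
exact: Rabs_mult_approx Htol (proj2 (H c Hc)) Hq.
Qed.

Lemma curve_near (gam : R -> vec n) t d : 0 < d ->
  (forall j, continuity_pt (fun u => gam u j) t) ->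
  exists d', 0 < d' /\ forall h, Rabs h < d' -> near (gam t) (gam (t + h)) d.
Proof.
move=> Hd H.
have [d' [Hd' Hall]] : exists d', 0 < d' /\ forall j h, Rabs h < d' ->
    Rabs (gam (t + h) j - gam t j) < d.
  apply: (ord_uniform_delta (P := fun j d' => forall h, Rabs h < d' ->
    Rabs (gam (t + h) j - gam t j) < d)) => [j e e' He Hj h Hh|j].
    by apply: Hj; lra.
  have [e [He He']] := continuity_pt_ball (H j) Hd.
  by exists e; split => // h Hh; apply: He'; rewrite Rplus_minus_l.
by exists d'; split => // h Hh j; apply: Hall.
Qed.

(* telescope over the coordinates, mean value theorem in each one *)
Lemma derivable_pt_lim_along_curve (G : vec n -> R -> R) (D : 'I_n -> vec n -> R -> R)
    (gam : R -> vec n) (gd : vec n) t Gt d0 :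
  0 < d0 ->
  (forall j y s, near (gam t) y d0 -> Rabs (s - t) < d0 ->
     pd (fun y => G y s) j y (D j y s)) ->
  (forall j, jcont_at (D j) (gam t) t) ->
  derivable_pt_lim (fun s => G (gam t) s) t Gt ->
  (forall j, derivable_pt_lim (fun u => gam u j) t (gd j)) ->
  derivable_pt_lim (fun u => G (gam u) u) t (isum (fun j => D j (gam t) t * gd j) + Gt).
Proof.
move=> Hd0 Hpd Hct HGt Hgam e He.
set x := gam t.
have Hn : 0 < INR n + 1 by have := pos_INR n; lra.
set eta := e / 2 / (INR n + 1).
have Heta : 0 < eta by apply: Rdiv_lt_0_compat; lra.
pose K k := 1 + Rabs (D k x t) + Rabs (gd k).
have HK k : 0 < K k by rewrite /K; have := Rabs_pos (D k x t); have := Rabs_pos (gd k); lra.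
pose tol k := Rmin 1 (eta / K k).
have Htol k : 0 < tol k by apply: Rmin_pos; [lra | apply: Rdiv_lt_0_compat].
have Htol_eta k : tol k * K k <= eta.
  have := Rmin_r 1 (eta / K k); have := HK k; rewrite -/(tol k) => HKk Hle.
  by apply: Rle_trans (Rmult_le_compat_r _ _ _ (Rlt_le _ _ HKk) Hle) _; right; field; lra.
have [d1 [Hd1 H1]] : exists d, 0 < d /\ forall k y s, near x y d -> Rabs (s - t) < d ->
    Rabs (D k y s - D k x t) < tol k.
  apply: (ord_uniform_delta (P := fun k d => forall y s, near x y d -> Rabs (s - t) < d ->
    Rabs (D k y s - D k x t) < tol k)) => [k d d' Hdd H y s Hy Hs|k].
    by apply: H; [apply: near_le Hy; lra | lra].
  exact: Hct.
set dd := Rmin d1 d0.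
have Hdd : 0 < dd by apply: Rmin_pos.
have [d2 [Hd2 H2]] := curve_near Hdd (fun j => derivable_pt_lim_continuity_pt (Hgam j)).
have [d3 [Hd3 H3]] : exists d, 0 < d /\ forall k h, h <> 0 -> Rabs h < d ->
    Rabs ((gam (t + h) k - x k) / h - gd k) < tol k.
  apply: (ord_uniform_delta (P := fun k d => forall h, h <> 0 -> Rabs h < d ->
    Rabs ((gam (t + h) k - x k) / h - gd k) < tol k)) => [k d d' Hdd' H h Hh0 Hh|k].
    by apply: H => //; lra.
  by have [del Hdel] := Hgam k _ (Htol k); exists del; split; [apply: cond_pos | apply: Hdel].
have [d4 Hd4] := HGt (e / 2) ltac:(lra).
have Hdel : 0 < Rmin (Rmin dd d2) (Rmin d3 d4).
  by apply: Rmin_pos; apply: Rmin_pos => //; apply: cond_pos.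
exists (mkposreal _ Hdel) => h Hh0 /= Hh.
have [/Rmin_Rgt_l [Hhdd Hhd2] /Rmin_Rgt_l [Hhd3 Hhd4]] := Rmin_Rgt_l _ _ _ Hh.
have := Rmin_l d1 d0; have := Rmin_r d1 d0; rewrite -/dd => Hdd0 Hdd1.
set w := gam (t + h).
have Hw : near x w dd by apply: H2; lra.
have Hst : Rabs (t + h - t) = Rabs h by congr Rabs; ring.
have Hterm (k : 'I_n) : Rabs ((G (splice x w k.+1) (t + h) - G (splice x w k) (t + h)) / h
                     - D k x t * gd k) <= eta.
  apply: Rle_trans (splice_step_quotient (F := fun y => G y (t + h))
    (DkF := fun y => D k y (t + h)) Hh0 (conj (Htol k) (Rmin_l _ _)) _ _) (Htol_eta k).
  - move=> c Hc; have Hnear := near_splice Hw Hc; split.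
      by apply: Hpd; [apply: near_le Hnear; lra | rewrite Hst; lra].
    by apply: H1; [apply: near_le Hnear; lra | rewrite Hst; lra].
  - by apply: H3 => //; lra.
have -> : (G w (t + h) - G x t) / h - (isum (fun j => D j x t * gd j) + Gt) =
    isum (fun k : 'I_n => (G (splice x w k.+1) (t + h) - G (splice x w k) (t + h)) / h
                          - D k x t * gd k) + ((G x (t + h) - G x t) / h - Gt).
  rewrite isumB /Rdiv -isum_mul_r -(telescope_coords (fun y => G y (t + h))).
  by field.
apply: Rle_lt_trans (Rabs_triang _ _) _.
have : Rabs (isum (fun k : 'I_n => (G (splice x w k.+1) (t + h) - G (splice x w k) (t + h)) / h
                                   - D k x t * gd k)) < e / 2 by apply: Rabs_isum_lt; [lra | exact: Hterm].
have := Hd4 h Hh0 ltac:(lra); rewrite /= -/x; lra.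
Qed.

End ChainRule.

Module MixedPartials.
Import Coquelicot.Coquelicot.

Lemma pd_is_derive n (F : vec n -> R) k y l :
  pd F k y l -> is_derive (fun a => F (setc y k a)) (y k) l.
Proof. by move=> H; apply/is_derive_Reals. Qed.

(* Schwarz's theorem, through Coquelicot's two-variable version on the plane
   spanned by coordinates [i] and [j] *)
Lemma pd_comm n (F : vec n -> R) (DF : 'I_n -> vec n -> R)
    (D2 : 'I_n -> 'I_n -> vec n -> R) :
  (forall i x, pd F i x (DF i x)) -> (forall i j x, pd (DF j) i x (D2 i j x)) ->
  (forall i j x, vcont_at (D2 i j) x) ->
  forall i j x, D2 i j x = D2 j i x.
Proof.
move=> H1 H2 H3 i j x.
case: (i =P j) => [->|Hij] //.
pose w u v := setc (setc x i u) j v.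
have Hji : j <> i by move=> E; apply: Hij.
have wi u v : w u v i = u by rewrite /w setc_neq // setc_eq.
have wj u v : w u v j = v by rewrite /w setc_eq.
have si u v a : setc (w u v) i a = w a v by rewrite /w setcC // setc_setc.
have sj u v b : setc (w u v) j b = w u b by rewrite /w setc_setc.
have wx : w (x i) (x j) = x by rewrite /w !setc_id.
have di (G : vec n -> R) DG u v : (forall y, pd G i y (DG y)) ->
    is_derive (fun a => G (w a v)) u (DG (w u v)).
  move=> HG; have := pd_is_derive (HG (w u v)); rewrite wi.
  by have -> : (fun a => G (setc (w u v) i a)) = (fun a => G (w a v))
    by apply: functional_extensionality => a; rewrite si.
have dj (G : vec n -> R) DG u v : (forall y, pd G j y (DG y)) ->
    is_derive (fun b => G (w u b)) v (DG (w u v)).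
  move=> HG; have := pd_is_derive (HG (w u v)); rewrite wj.
  by have -> : (fun b => G (setc (w u v) j b)) = (fun b => G (w u b))
    by apply: functional_extensionality => b; rewrite sj.
pose f u v := F (w u v).
have E1 v : (fun u => Derive (fun b => f u b) v) = (fun u => DF j (w u v)).
  by apply: functional_extensionality => u; apply: is_derive_unique; apply: dj.
have E2 u : (fun v => Derive (fun a => f a v) u) = (fun v => DF i (w u v)).
  by apply: functional_extensionality => v; apply: is_derive_unique; apply: di.
have F1 u v : Derive (fun a => Derive (fun b => f a b) v) u = D2 i j (w u v).
  by rewrite E1; apply: is_derive_unique; apply: di => y; apply: H2.
have F2 u v : Derive (fun b => Derive (fun a => f a b) u) v = D2 j i (w u v).
  by rewrite E2; apply: is_derive_unique; apply: dj => y; apply: H2.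
have Hnear u v d : Rabs (u - x i) < d -> Rabs (v - x j) < d -> near x (w u v) d.
  move=> Hu Hv k; rewrite /w /setc.
  case: (k =P j) => [->|_] //; case: (k =P i) => [->|_] //.
  by rewrite Rminus_diag Rabs_R0; have := Rabs_pos (u - x i); lra.
have := @Schwarz f (x i) (x j); rewrite F1 F2 wx; apply.
- exists (mkposreal 1 Rlt_0_1) => u v _ _; split; [|split; [|split]].
  + by exists (DF i (w u v)); apply: di.
  + by exists (DF j (w u v)); apply: dj.
  + by rewrite E1; exists (D2 i j (w u v)); apply: di => y; apply: H2.
  + by rewrite E2; exists (D2 j i (w u v)); apply: dj => y; apply: H2.
- move=> eps; have [d [Hd Hd']] := H3 i j x eps (cond_pos eps).
  by exists (mkposreal d Hd) => u v Hu Hv; rewrite !F1 wx; apply: Hd'; apply: Hnear.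
- move=> eps; have [d [Hd Hd']] := H3 j i x eps (cond_pos eps).
  by exists (mkposreal d Hd) => u v Hu Hv; rewrite !F2 wx; apply: Hd'; apply: Hnear.
Qed.

End MixedPartials.

Section Segments.
Context {n : nat}.
Implicit Types a b : vec n.

Definition segment a b (th : R) : vec n := fun k => a k + th * (b k - a k).

Lemma segment0 a b : segment a b 0 = a.
Proof. by apply: functional_extensionality => k; rewrite /segment; ring. Qed.

Lemma segment1 a b : segment a b 1 = b.
Proof. by apply: functional_extensionality => k; rewrite /segment; ring. Qed.

Lemma derivable_pt_lim_segment a b k th :
  derivable_pt_lim (fun u => segment a b u k) th (b k - a k).
Proof.
apply: derivable_pt_lim_val (derivable_pt_lim_plus _ _ th _ _ (derivable_pt_lim_const (a k) th)
  (derivable_pt_lim_mul_const (b k - a k) (derivable_pt_lim_id th))) _.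
ring.
Qed.

Lemma derivable_pt_lim_along_segment (F : vec n -> R) (DF : 'I_n -> vec n -> R) a b th :
  (forall i x, pd F i x (DF i x)) -> (forall i x, vcont_at (DF i) x) ->
  derivable_pt_lim (fun u => F (segment a b u)) th
    (isum (fun j => DF j (segment a b th) * (b j - a j))).
Proof.
move=> H1 H2.
have := derivable_pt_lim_along_curve (G := fun y _ => F y) (D := fun j y _ => DF j y)
  (gam := segment a b) Rlt_0_1 (fun j y s _ _ => H1 j y)
  (fun j => jcont_at_static th (H2 j _)) (derivable_pt_lim_const _ _)
  (fun j => derivable_pt_lim_segment a b j th).
by rewrite Rplus_0_r.
Qed.

Lemma convex_grad_le (F : vec n -> R) (DF : 'I_n -> vec n -> R) :
  (forall i x, pd F i x (DF i x)) -> (forall i x, vcont_at (DF i) x) ->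
  convex_fun F -> forall a b, isum (fun k => DF k a * (b k - a k)) <= F b - F a.
Proof.
move=> H1 H2 Hc a b.
have Hd := derivable_pt_lim_along_segment a b 0 H1 H2; rewrite segment0 in Hd.
set L := isum _ in Hd *.
apply: Rnot_lt_le => Hlt.
have [del Hdel] := Hd (L - (F b - F a)) ltac:(lra).
have Hdp := cond_pos del.
set h := Rmin (del / 2) (1 / 2).
have Hh : 0 < h by apply: Rmin_pos; lra.
have Hh1 : h <= 1 / 2 by apply: Rmin_r.
have Hh2 : h <= del / 2 by apply: Rmin_l.
have := Hdel h ltac:(lra) ltac:(rewrite Rabs_right; lra).
rewrite Rplus_0_l segment0 => /Rabs_def2 Hq.
have Hcv : F (segment a b h) <= h * F b + (1 - h) * F a.
  have -> : segment a b h = (fun k => h * b k + (1 - h) * a k).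
    by apply: functional_extensionality => k; rewrite /segment; ring.
  by apply: Hc; lra.
have : (F (segment a b h) - F a) / h <= F b - F a.
  apply: (Rmult_le_reg_r h) => //.
  by rewrite /Rdiv Rmult_assoc Rinv_l; lra.
lra.
Qed.

(* mean value theorem for [u |-> <grad F (segment a b u), b - a>] *)
Lemma strong_monotone_grad (F : vec n -> R) (DF : 'I_n -> vec n -> R)
    (D2 : 'I_n -> 'I_n -> vec n -> R) m :
  (forall i x, pd F i x (DF i x)) -> (forall i j x, pd (DF j) i x (D2 i j x)) ->
  (forall i j x, vcont_at (D2 i j) x) ->
  (forall x v, m * sqnorm v <= qform (fun i j => D2 i j x) v) ->
  forall a b, m * sqnorm (fun k => b k - a k) <=
              isum (fun k => (DF k b - DF k a) * (b k - a k)).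
Proof.
move=> H1 H2 H3 Hm a b.
set d := fun k => b k - a k.
pose psi u := isum (fun k => DF k (segment a b u) * d k).
pose psi' u := isum (fun k => isum (fun j => D2 j k (segment a b u) * d j) * d k).
have Hder u : derivable_pt_lim psi u (psi' u).
  apply: derivable_pt_lim_isum => k; apply: derivable_pt_lim_mul_const.
  exact: derivable_pt_lim_along_segment (fun j x => H2 j k x) (fun j => H3 j k).
have [c [_ Ec]] := MVT_between (a := 0) (b := 1) (fun c _ => Hder c).
have -> : isum (fun k => (DF k b - DF k a) * d k) = psi 1 - psi 0.
  by rewrite /psi segment1 segment0 -isumB; apply: isum_ext => k; ring.
rewrite Ec Rminus_0_r Rmult_1_r.
apply: Rle_trans (Hm (segment a b c) d) _; right.
rewrite /psi' /qform isum_swap; apply: isum_ext => j; rewrite isum_mul_r.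
by apply: isum_ext => k; ring.
Qed.

End Segments.

Section BarrierGap.
Context {n p : nat}.

Lemma young_isum m (g d : vec n) : 0 < m ->
  isum (fun k => g k * d k) <= sqnorm g / (2 * m) + m / 2 * sqnorm d.
Proof.
move=> Hm; rewrite /sqnorm /Rdiv (isum_mul_r (fun k => g k * g k)) -isum_mul_l -isumD.
apply: isum_le => k.
have := Rle_0_sqr (g k - m * d k); rewrite /Rsqr => Hsq.
apply: (Rmult_le_reg_r (2 * m)); first lra.
by field_simplify; [nra | lra].
Qed.

Section ConvexConstraint.
Variables (F : vec n -> R) (DF : 'I_n -> vec n -> R).
Hypotheses (HF : forall i x, pd F i x (DF i x)) (HDF : forall i x, vcont_at (DF i) x)
  (Fconv : convex_fun F).

Lemma barrier_term_le1 (xs zt : vec n) Sv : 0 <= Sv -> F xs <= 0 -> F zt < Sv ->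
  - isum (fun k => DF k zt * (zt k - xs k)) / (Sv - F zt) <= 1.
Proof.
move=> HS Hxs Hzt.
have := convex_grad_le HF HDF Fconv zt xs.
rewrite (isum_ext (g := fun k => - (DF k zt * (zt k - xs k)))); last by move=> k; ring.
rewrite isumN => Hg.
apply: (Rmult_le_reg_r (Sv - F zt)); first lra.
by rewrite /Rdiv Rmult_assoc Rinv_l; lra.
Qed.

Lemma multiplier_term_le (xs zt : vec n) Sv lam : 0 <= lam -> lam * F xs = 0 ->
  F zt < Sv -> lam * isum (fun k => DF k xs * (zt k - xs k)) <= Sv * lam.
Proof.
move=> Hlam Hcs Hzt.
have := Rmult_le_compat_l lam _ _ Hlam (convex_grad_le HF HDF Fconv xs zt).
have := Rmult_le_compat_l lam _ _ Hlam (Rlt_le _ _ Hzt).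
lra.
Qed.

End ConvexConstraint.

(* At a fixed time, with [C = 1 / c t] and [Sv = s t]: strong monotonicity of
   [grad f0] between [zt] and the KKT point [xs], where each barrier term
   contributes at most [C] and each multiplier term at most [Sv * lam i]. *)
Lemma barrier_gap_bound (f0 : vec n -> R) (fc : 'I_p -> vec n -> R)
    (DF0 : 'I_n -> vec n -> R) (D2F0 : 'I_n -> 'I_n -> vec n -> R)
    (DFc : 'I_p -> 'I_n -> vec n -> R) m C Sv (lam : 'I_p -> R) (xs zt g : vec n) :
  0 < C -> 0 <= Sv ->
  (forall i x, pd f0 i x (DF0 i x)) -> (forall i j x, pd (DF0 j) i x (D2F0 i j x)) ->
  (forall i j x, vcont_at (D2F0 i j) x) ->
  (forall x v, m * sqnorm v <= qform (fun i j => D2F0 i j x) v) ->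
  (forall i k x, pd (fc i) k x (DFc i k x)) -> (forall i k x, vcont_at (DFc i k) x) ->
  (forall i, convex_fun (fc i)) ->
  (forall k, DF0 k xs + isum (fun i => lam i * DFc i k xs) = 0) ->
  (forall i, lam i * fc i xs = 0) -> (forall i, 0 <= lam i) -> (forall i, fc i xs <= 0) ->
  (forall i, fc i zt < Sv) ->
  (forall k, g k = DF0 k zt + C * isum (fun i => DFc i k zt / (Sv - fc i zt))) ->
  m * sqnorm (fun k => zt k - xs k) <=
    isum (fun k => g k * (zt k - xs k)) + INR p * C + Sv * isum lam.
Proof.
move=> HC HS H0 H02 H02c Hm Hc Hcc Hconv Hk Hcs Hlam Hfeas Hz Hg.
set d := fun k => zt k - xs k.
pose Q i := Sv - fc i zt.
have Emono k : (DF0 k zt - DF0 k xs) * d k = g k * d k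
    + isum (fun i => C * (- (DFc i k zt * d k) / Q i))
    + isum (fun i => lam i * (DFc i k xs * d k)).
  have -> : DF0 k xs = - isum (fun i => lam i * DFc i k xs) by have := Hk k; lra.
  have -> : isum (fun i => C * (- (DFc i k zt * d k) / Q i)) =
            - (C * isum (fun i => DFc i k zt / Q i)) * d k.
    rewrite -isum_mul_l -isumN isum_mul_r; apply: isum_ext => i; rewrite /Q; field.
    by have := Hz i; lra.
  have -> : isum (fun i => lam i * (DFc i k xs * d k)) =
            isum (fun i => lam i * DFc i k xs) * d k.
    by rewrite isum_mul_r; apply: isum_ext => i; ring.
  by rewrite Hg /Q; ring.
have := strong_monotone_grad H0 H02 H02c Hm xs zt.
rewrite -/d (isum_ext Emono) !isumD
  (isum_swap (fun k i => C * (- (DFc i k zt * d k) / Q i)))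
  (isum_swap (fun k i => lam i * (DFc i k xs * d k))) => Hmono.
have Hbar : isum (fun i => isum (fun k => C * (- (DFc i k zt * d k) / Q i))) <= INR p * C.
  rewrite -isum_const; apply: isum_le => i.
  rewrite isum_mul_l /Rdiv -isum_mul_r isumN -/(Rdiv _ _).
  rewrite -[X in _ <= X]Rmult_1_r; apply: Rmult_le_compat_l; first lra.
  exact: barrier_term_le1 (Hc i) (Hcc i) (Hconv i) _ _ _ HS (Hfeas i) (Hz i).
have Hmul : isum (fun i => isum (fun k => lam i * (DFc i k xs * d k))) <= Sv * isum lam.
  rewrite -isum_mul_l; apply: isum_le => i; rewrite isum_mul_l.
  exact: multiplier_term_le (Hc i) (Hcc i) (Hconv i) _ _ _ _ (Hlam i) (Hcs i) (Hz i).
by change (isum (fun k => g k * d k)) with (isum (fun k => g k * (zt k - xs k))) in Hmono; lra.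
Qed.

End BarrierGap.

Section Uniqueness.
Context {n : nat}.

Lemma pd_unique (F : vec n -> R) i x l l' : pd F i x l -> pd F i x l' -> l = l'.
Proof. exact: uniqueness_limite. Qed.

Lemma hess_unique (F : vec n -> R) (DF : 'I_n -> vec n -> R) x H d i j l :
  hess F x H -> 0 < d -> (forall j y, near x y d -> pd F j y (DF j y)) ->
  pd (DF j) i x l -> H i j = l.
Proof.
move=> [DF' [d' [Hd' [HDF' HH]]]] Hd HDF Hl.
apply: (pd_unique (HH i j)).
have Hdm : 0 < Rmin d' d by apply: Rmin_pos.
apply: (derivable_pt_lim_local Hdm) Hl => w Hw.
have Hn := near_setc Hdm Hw.
exact: pd_unique (HDF j _ (near_le (Rmin_r _ _) Hn)) (HDF' j _ (near_le (Rmin_l _ _) Hn)).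
Qed.

Lemma dxt_derivable (Phi : vec n -> R -> R) (G : 'I_n -> R -> R) x t m' d j :
  dxt Phi x t m' -> 0 < d ->
  (forall j s, Rabs (s - t) < d -> pd (fun y => Phi y s) j x (G j s)) ->
  derivable_pt_lim (G j) t (m' j).
Proof.
move=> [G' [d' [Hd' [HG' HGd']]]] Hd HG.
have Hdm : 0 < Rmin d' d by apply: Rmin_pos.
apply: (derivable_pt_lim_local Hdm) (HGd' j) => s /Rmin_Rgt_l [Hs1 Hs2].
exact: pd_unique (HG' j s Hs1) (HG j s Hs2).
Qed.

End Uniqueness.

Section LogBarrier.
Context {n p : nat}.
Variables (fc : 'I_p -> vec n -> R) (DFc : 'I_p -> 'I_n -> vec n -> R) (C Sv : R) (y : vec n).
Hypothesis (Hpos : forall i, 0 < Sv - fc i y).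

Lemma pd_log_barrier (f0 : vec n -> R) (DF0 : 'I_n -> vec n -> R) k :
  pd f0 k y (DF0 k y) -> (forall i, pd (fc i) k y (DFc i k y)) ->
  pd (fun y => f0 y - C * isum (fun i => ln (Sv - fc i y))) k y
     (DF0 k y + C * isum (fun i => DFc i k y / (Sv - fc i y))).
Proof.
move=> H0 Hc; rewrite /pd.
have Hi i : derivable_pt_lim (fun w => ln (Sv - fc i (setc y k w))) (y k)
    (/ (Sv - fc i y) * (0 - DFc i k y)).
  apply: (derivable_pt_lim_comp (fun w => Sv - fc i (setc y k w)) ln).
    exact: (derivable_pt_lim_minus (fun _ => Sv) _ _ _ _ (derivable_pt_lim_const _ _) (Hc i)).
  by rewrite /= setc_id; apply: derivable_pt_lim_ln.
apply: derivable_pt_lim_val (derivable_pt_lim_minus _ _ _ _ _ H0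
  (derivable_pt_lim_scal _ C _ _ (derivable_pt_lim_isum Hi))) _.
rewrite (isum_ext (g := fun i => - (DFc i k y / (Sv - fc i y)))) ?isumN; first ring.
by move=> i; rewrite /Rdiv; ring.
Qed.

Lemma pd_log_barrier_grad (DF0k : vec n -> R) (D2F0jk : R) (D2Fcjk : 'I_p -> R) j k :
  pd DF0k j y D2F0jk -> (forall i, pd (DFc i k) j y (D2Fcjk i)) ->
  (forall i, pd (fc i) j y (DFc i j y)) ->
  pd (fun y => DF0k y + C * isum (fun i => DFc i k y / (Sv - fc i y))) j y
     (D2F0jk + C * isum (fun i => (D2Fcjk i * (Sv - fc i y) + DFc i k y * DFc i j y)
                                   / ((Sv - fc i y) * (Sv - fc i y)))).
Proof.
move=> H0 Hk Hj; rewrite /pd.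
apply: (derivable_pt_lim_plus _ _ _ _ _ H0
  (derivable_pt_lim_scal _ C _ _ (derivable_pt_lim_isum _))) => i.
have Hnz : Sv - fc i (setc y j (y j)) <> 0 by rewrite setc_id; have := Hpos i; lra.
apply: derivable_pt_lim_val (derivable_pt_lim_div _ _ _ _ _ (Hk i)
  (derivable_pt_lim_minus (fun _ => Sv) _ _ _ _ (derivable_pt_lim_const Sv _) (Hj i)) Hnz) _.
by rewrite /minus_fct /= setc_id /Rsqr; field; have := Hpos i; lra.
Qed.

End LogBarrier.

Section Vanishing.
Implicit Types f g : R -> R.

(* a one-sided condition: for nonnegative [f] it means [f t -> 0] *)
Definition vanishes f : Prop := forall e, 0 < e -> exists T, forall t, T <= t -> f t < e.

Lemma vanishes_le f g T0 : (forall t, T0 <= t -> f t <= g t) -> vanishes g -> vanishes f.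
Proof.
move=> Hfg Hg e He; have [T HT] := Hg e He.
by exists (Rmax T0 T) => t Ht; apply: Rle_lt_trans (Hfg t _) (HT t _);
  [apply: Rle_trans (Rmax_l _ _) Ht | apply: Rle_trans (Rmax_r _ _) Ht].
Qed.

Lemma vanishes_plus f g : vanishes f -> vanishes g -> vanishes (fun t => f t + g t).
Proof.
move=> Hf Hg e He.
have [T1 H1] := Hf (e / 2) ltac:(lra); have [T2 H2] := Hg (e / 2) ltac:(lra).
exists (Rmax T1 T2) => t Ht.
have := H1 t (Rle_trans _ _ _ (Rmax_l _ _) Ht); have := H2 t (Rle_trans _ _ _ (Rmax_r _ _) Ht).
lra.
Qed.

Lemma vanishes_scal a f : 0 <= a -> vanishes f -> vanishes (fun t => a * f t).
Proof.
move=> Ha Hf e He.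
have Hea : 0 < e / (a + 1) by apply: Rdiv_lt_0_compat; lra.
have [T HT] := Hf _ Hea; exists T => t Ht.
have : a * f t <= a * (e / (a + 1)) by apply: Rmult_le_compat_l => //; have := HT t Ht; lra.
have : a * (e / (a + 1)) * (a + 1) = a * e by field; lra.
nra.
Qed.

Lemma vanishes_isum n (F : 'I_n -> R -> R) :
  (forall i, vanishes (F i)) -> vanishes (fun t => isum (fun i => F i t)).
Proof.
move=> H e He.
have Hn : 0 < INR n + 1 by have := pos_INR n; lra.
have [T HT] := ord_uniform_threshold (P := fun i T => forall t, T <= t ->
  F i t < e / (INR n + 1)) (fun i T T' HTT' Hi t Ht => Hi t ltac:(lra))
  (fun i => H i _ (Rdiv_lt_0_compat _ _ He Hn)).
exists T => t Ht.
apply: Rle_lt_trans (isum_le (g := fun _ => e / (INR n + 1)) (fun i => Rlt_le _ _ (HT i t Ht))) _.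
rewrite isum_const; apply: (Rmult_lt_reg_r (INR n + 1)) => //.
by rewrite Rmult_assoc /Rdiv Rmult_assoc Rinv_l; lra.
Qed.

Lemma vanishes_exp a b : 0 < a -> vanishes (fun t => exp (- a * (t - b))).
Proof.
move=> Ha e He; exists (b + 1 - ln e / a) => t Ht.
rewrite -(exp_ln e He); apply: exp_increasing.
have : a * (1 - ln e / a) <= a * (t - b) by apply: Rmult_le_compat_l; lra.
have -> : a * (1 - ln e / a) = a - ln e by field; lra.
lra.
Qed.

Lemma vanishes_inv (c : R -> R) :
  (forall M, exists T, forall t, T <= t -> M < c t) -> vanishes (fun t => / c t).
Proof.
move=> Hc e He; have [T HT] := Hc (/ e); exists T => t Ht.
have := HT t Ht => Hct.
rewrite -(Rinv_inv e); apply: Rinv_lt_contravar => //.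
by apply: Rmult_lt_0_compat; [apply: Rinv_0_lt_compat | apply: Rlt_trans Hct; apply: Rinv_0_lt_compat].
Qed.

Lemma vanishes_coords n (d : R -> vec n) : vanishes (fun t => sqnorm (d t)) ->
  forall e, 0 < e -> exists T, forall t, T <= t -> forall i, Rabs (d t i) < e.
Proof.
move=> H e He; have [T HT] := H (e * e) (Rmult_lt_0_compat _ _ He He).
exists T => t Ht i.
have Hi : d t i * d t i < e * e.
  exact: Rle_lt_trans (isum_ge_term (f := fun k => d t k * d t k) i (fun k => Rle_0_sqr _))
    (HT t Ht).
apply: Rnot_le_lt => Hle.
have : e * e <= Rabs (d t i) * Rabs (d t i) by apply: Rmult_le_compat; lra.
by rewrite -Rabs_mult Rabs_right; [lra | apply: Rle_ge; apply: Rle_0_sqr].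
Qed.

End Vanishing.

(* Lyapunov argument: [V = |g|^2] satisfies [V' = -2 g^T P g <= -2 sigma V]. *)
Lemma sqnorm_exp_decay n (P : 'I_n -> 'I_n -> R) sigma (g : R -> vec n) a :
  (forall v, sigma * sqnorm v <= qform P v) ->
  (forall u k, a <= u -> derivable_pt_lim (fun v => g v k) u (- isum (fun j => P k j * g u j))) ->
  forall u, a <= u -> sqnorm (g u) <= sqnorm (g a) * exp (- (2 * sigma) * (u - a)).
Proof.
move=> HP Hg u Hau.
pose W v := sqnorm (g v) * exp (2 * sigma * v).
pose W' v := -2 * qform P (g v) * exp (2 * sigma * v)
             + sqnorm (g v) * (exp (2 * sigma * v) * (2 * sigma)).
have HW v : a <= v -> derivable_pt_lim W v (W' v).
  move=> Hv; apply: (derivable_pt_lim_mult _ _ _ _ _ _ (derivable_pt_lim_exp_lin _ _)).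
  apply: derivable_pt_lim_val (derivable_pt_lim_isum (fun k =>
    derivable_pt_lim_mult _ _ _ _ _ (Hg v k Hv) (Hg v k Hv))) _.
  rewrite /qform -isum_mul_l; apply: isum_ext => k.
  have -> : isum (fun j => g v k * P k j * g v j) = g v k * isum (fun j => P k j * g v j).
    by rewrite -isum_mul_l; apply: isum_ext => j; ring.
  ring.
have HW'le v : W' v <= 0.
  by rewrite /W'; have := HP (g v); have := exp_pos (2 * sigma * v); nra.
have [c [Hc Ec]] : exists c, Rmin a u <= c <= Rmax a u /\ W u - W a = W' c * (u - a).
  by apply: MVT_between => c; rewrite Rmin_left // => Hc; apply: HW; lra.
have HWu : W u <= W a by have := HW'le c; nra.
have Eexp v : exp (2 * sigma * v) * exp (- (2 * sigma) * v) = 1.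
  by rewrite -exp_plus -exp_0; congr exp; ring.
have -> : sqnorm (g u) = W u * exp (- (2 * sigma) * u) by rewrite /W Rmult_assoc Eexp; ring.
have -> : exp (- (2 * sigma) * (u - a)) = exp (2 * sigma * a) * exp (- (2 * sigma) * u).
  by rewrite -exp_plus; congr exp; ring.
by rewrite -Rmult_assoc; apply: Rmult_le_compat_r; [left; apply: exp_pos | exact: HWu].
Qed.

Section BarrierFlow.
Variables (n p : nat) (f0 : vec n -> R -> R) (fc : 'I_p -> vec n -> R -> R)
  (DF0 : 'I_n -> vec n -> R -> R) (D2F0 : 'I_n -> 'I_n -> vec n -> R -> R)
  (DFc : 'I_p -> 'I_n -> vec n -> R -> R) (D2Fc : 'I_p -> 'I_n -> 'I_n -> vec n -> R -> R)
  (c s : R -> R).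
Hypotheses
  (pd_f0 : forall x t k, 0 <= t -> pd (fun y => f0 y t) k x (DF0 k x t))
  (pd_DF0 : forall x t i j, 0 <= t -> pd (fun y => DF0 j y t) i x (D2F0 i j x t))
  (pd_fc : forall i x t k, 0 <= t -> pd (fun y => fc i y t) k x (DFc i k x t))
  (pd_DFc : forall i x t k j, 0 <= t -> pd (fun y => DFc i j y t) k x (D2Fc i k j x t))
  (jcont_D2F0 : forall i j, jcont (D2F0 i j)) (jcont_fc : forall i, jcont (fc i))
  (jcont_DFc : forall i k, jcont (DFc i k)) (jcont_D2Fc : forall i k j, jcont (D2Fc i k j))
  (c_pos : forall t, 0 <= t -> 0 < c t) (c_cont : forall t, 0 < t -> continuity_pt c t)
  (s_ge0 : forall t, 0 <= s t) (s_cont : forall t, continuity_pt s t).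

Definition in_domain y u : Prop := forall i, 0 < s u - fc i y u.

Definition barrier_grad k y u : R :=
  DF0 k y u + / c u * isum (fun i => DFc i k y u / (s u - fc i y u)).

Definition barrier_hess j k y u : R :=
  D2F0 j k y u + / c u * isum (fun i =>
    (D2Fc i j k y u * (s u - fc i y u) + DFc i k y u * DFc i j y u)
      / ((s u - fc i y u) * (s u - fc i y u))).

Definition kkt t x (lam : 'I_p -> R) : Prop :=
  (forall k, DF0 k x t + isum (fun i => lam i * DFc i k x t) = 0) /\
  (forall i, lam i * fc i x t = 0) /\ (forall i, 0 <= lam i) /\ (forall i, fc i x t <= 0).

Lemma pd_barrier u y k : 0 <= u -> in_domain y u ->
  pd (fun y => Phit f0 fc c s y u) k y (barrier_grad k y u).
Proof.
move=> Hu Hy.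
exact: (pd_log_barrier (fc := fun i y => fc i y u) (DFc := fun i k y => DFc i k y u)
  (/ c u) Hy (f0 := fun y => f0 y u) (DF0 := fun k y => DF0 k y u) (pd_f0 _ _ Hu) (fun i => pd_fc i _ _ Hu)).
Qed.

Lemma pd_barrier_grad u y j k : 0 <= u -> in_domain y u ->
  pd (fun y => barrier_grad k y u) j y (barrier_hess j k y u).
Proof.
move=> Hu Hy.
exact: (pd_log_barrier_grad (fc := fun i y => fc i y u) (DFc := fun i k y => DFc i k y u)
  (/ c u) Hy (DF0k := fun y => DF0 k y u) (pd_DF0 y j k Hu) (fun i => pd_DFc i y j k Hu) (fun i => pd_fc i y j Hu)).
Qed.

Lemma barrier_hess_sym u : 0 <= u -> forall j k y, barrier_hess j k y u = barrier_hess k j y u.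
Proof.
move=> Hu j k y; rewrite /barrier_hess.
rewrite (MixedPartials.pd_comm (F := fun y => f0 y u) (DF := fun k y => DF0 k y u)
  (D2 := fun i j y => D2F0 i j y u) (fun i x => pd_f0 x i Hu) (fun i j x => pd_DF0 x i j Hu)
  (fun i j x => vcont_at_of_jcont x (jcont_D2F0 i j) Hu)).
congr (_ + _ * _); apply: isum_ext => i.
rewrite (MixedPartials.pd_comm (F := fun y => fc i y u) (DF := fun k y => DFc i k y u)
  (D2 := fun k j y => D2Fc i k j y u) (fun k x => pd_fc i x k Hu)
  (fun k j x => pd_DFc i x k j Hu) (fun k j x => vcont_at_of_jcont x (jcont_D2Fc i k j) Hu)).
by rewrite /Rdiv; ring.
Qed.

Lemma jcont_at_barrier_hess u y j k : 0 < u -> in_domain y u ->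
  jcont_at (barrier_hess j k) y u.
Proof.
move=> Hu Hy.
have HQ i : jcont_at (fun y v => s v - fc i y v) y u.
  exact: jcont_at_plus (jcont_at_time y (s_cont u))
    (jcont_at_opp (jcont_at_of_jcont y (jcont_fc i) Hu)).
apply: jcont_at_plus; first exact: jcont_at_of_jcont.
apply: jcont_at_mult.
  apply: jcont_at_time; apply: continuity_pt_inv (c_cont Hu) _.
  by have := c_pos (Rlt_le _ _ Hu); lra.
apply: jcont_at_isum => i; apply: jcont_at_mult.
  by apply: jcont_at_plus; apply: jcont_at_mult => //; apply: jcont_at_of_jcont.
apply: jcont_at_inv; last exact: jcont_at_mult.
by have := Hy i; nra.
Qed.

Lemma in_domain_near u y : 0 < u -> in_domain y u -> exists d, 0 < d /\
  forall y' u', near y y' d -> Rabs (u' - u) < d -> 0 < u' /\ in_domain y' u'.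
Proof.
move=> Hu Hy.
have [d [Hd Hdom]] : exists d, 0 < d /\ forall i y' u', near y y' d -> Rabs (u' - u) < d ->
    0 < s u' - fc i y' u'.
  apply: (ord_uniform_delta (P := fun i d => forall y' u', near y y' d ->
    Rabs (u' - u) < d -> 0 < s u' - fc i y' u')) => [i d d' Hdd H y' u' Hy' Hu'|i].
    by apply: H; [apply: near_le Hy'; lra | lra].
  have [d [Hd Hd']] := jcont_at_plus (jcont_at_time y (s_cont u))
    (jcont_at_opp (jcont_at_of_jcont y (jcont_fc i) Hu)) (Hy i).
  by exists d; split => // y' u' Hy' Hu'; have := Rabs_def2 _ _ (Hd' y' u' Hy' Hu'); lra.
exists (Rmin d u); split; first exact: Rmin_pos.
move=> y' u' Hy' /Rmin_Rgt_l [Hu'd Hu'u]; split; first by have := Rabs_def2 _ _ Hu'u; lra.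
by move=> i; apply: Hdom Hu'd; apply: near_le Hy'; apply: Rmin_l.
Qed.

Variables (P : 'I_n -> 'I_n -> R) (z : R -> vec n).
Hypotheses (z_dom : forall t, 0 <= t -> in_domain (z t) t)
  (z_ode : forall t, 0 < t ->
     exists (zd g m' : vec n) (H : 'I_n -> 'I_n -> R),
       (forall i, derivable_pt_lim (fun u => z u i) t (zd i)) /\
       grad (fun y => Phit f0 fc c s y t) (z t) g /\
       hess (fun y => Phit f0 fc c s y t) (z t) H /\
       dxt (Phit f0 fc c s) (z t) t m' /\
       (forall i, isum (fun j => H i j * zd j) = - (isum (fun j => P i j * g j) + m' i))).

(* chain rule, once the Hessian and the mixed derivative of the ODE are
   identified with the explicit ones; symmetry of the Hessian turns [H zd] into
   the chain-rule term *)
Lemma barrier_grad_flow u k : 0 < u ->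
  derivable_pt_lim (fun v => barrier_grad k (z v) v) u
    (- isum (fun j => P k j * barrier_grad j (z u) u)).
Proof.
move=> Hu; have Hu0 := Rlt_le _ _ Hu.
have [d0 [Hd0 Hin]] := in_domain_near Hu (z_dom Hu0).
have Hin_u y : near (z u) y d0 -> in_domain y u.
  by move=> Hy; apply: (proj2 (Hin y u Hy _)); rewrite Rminus_diag Rabs_R0.
have [zd [g [m' [H [Hzd [Hg [Hh [Hm' Hodeq]]]]]]]] := z_ode Hu.
have Eg j : g j = barrier_grad j (z u) u.
  exact: pd_unique (Hg j) (pd_barrier j Hu0 (z_dom Hu0)).
have EH i j : H i j = barrier_hess i j (z u) u.
  apply: hess_unique Hh Hd0 (fun j y Hy => pd_barrier j Hu0 (Hin_u y Hy)) _.
  exact: pd_barrier_grad Hu0 (z_dom Hu0).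
have Em : derivable_pt_lim (fun v => barrier_grad k (z u) v) u (m' k).
  apply: (dxt_derivable (G := fun j v => barrier_grad j (z u) v) _ Hm' Hd0) => j v Hv.
  have [Hv0 Hv'] := Hin (z u) v (near_refl (z u) Hd0) Hv.
  exact: pd_barrier j (Rlt_le _ _ Hv0) Hv'.
have := derivable_pt_lim_along_curve (G := barrier_grad k) (D := fun j => barrier_hess j k)
  Hd0 (fun j y v Hy Hv => let: conj Hv0 Hyv := Hin y v Hy Hv in
                          pd_barrier_grad j k (Rlt_le _ _ Hv0) Hyv)
  (fun j => jcont_at_barrier_hess j k Hu (z_dom Hu0)) Em Hzd.
move=> /derivable_pt_lim_val; apply.
rewrite (isum_ext (g := fun j => H k j * zd j)) => [|j]; last by rewrite EH barrier_hess_sym.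
rewrite Hodeq (isum_ext (g := fun j => P k j * barrier_grad j (z u) u)) => [|j]; last by rewrite Eg.
ring.
Qed.


Lemma kkt_of_gradients t x (mu : 'I_p -> R) : 0 <= t ->
  (exists (g0 : vec n) (gs : 'I_p -> vec n),
     grad (fun y => f0 y t) x g0 /\ (forall i, grad (fun y => fc i y t) x (gs i)) /\
     (forall k, g0 k + isum (fun i => mu i * gs i k) = 0) /\
     (forall i, mu i * fc i x t = 0) /\ (forall i, 0 <= mu i) /\ (forall i, fc i x t <= 0)) ->
  kkt t x mu.
Proof.
move=> Ht [g0 [gs [Hg0 [Hgs [Hsum Hrest]]]]]; split => // k.
rewrite -(Hsum k) (pd_unique (Hg0 k) (pd_f0 x k Ht)); congr (_ + _).
by apply: isum_ext => i; rewrite (pd_unique (Hgs i k) (pd_fc i x k Ht)).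
Qed.

Lemma hess_lower_bound m t x v : 0 <= t ->
  (forall H, hess (fun y => f0 y t) x H -> m * sqnorm v <= qform H v) ->
  m * sqnorm v <= qform (fun i j => D2F0 i j x t) v.
Proof.
move=> Ht; apply; exists (fun j y => DF0 j y t), 1; split; first lra.
by split => [j y _ | i j]; [apply: pd_f0 | apply: pd_DF0].
Qed.

Variables (m sigma : R) (xstar : R -> vec n) (lam : R -> 'I_p -> R).
Hypotheses (m_pos : 0 < m) (sigma_pos : 0 < sigma)
  (f0_strong : forall t x v, 0 <= t -> m * sqnorm v <= qform (fun i j => D2F0 i j x t) v)
  (fc_convex : forall i t, 0 <= t -> convex_fun (fun y => fc i y t))
  (xstar_kkt : forall t, 0 <= t -> kkt t (xstar t) (lam t))
  (P_coercive : forall v, sigma * sqnorm v <= qform P v).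

Lemma tracking_error_bound t : 1 <= t ->
  m / 2 * sqnorm (fun k => z t k - xstar t k) <=
    sqnorm (fun k => barrier_grad k (z 1) 1) * exp (- (2 * sigma) * (t - 1)) / (2 * m)
    + INR p * / c t + s t * isum (lam t).
Proof.
move=> Ht; have Ht0 : 0 <= t by lra.
have Hdecay := sqnorm_exp_decay (g := fun v k => barrier_grad k (z v) v) (a := 1) P_coercive
  (fun v k Hv => barrier_grad_flow (u := v) k ltac:(lra)) Ht.
have [Hstat [Hcs [Hlam Hfeas]]] := xstar_kkt Ht0.
have Hzt i : fc i (z t) t < s t by have := z_dom Ht0 i; lra.
have Hgap := barrier_gap_bound (f0 := fun y => f0 y t) (fc := fun i y => fc i y t)
  (DF0 := fun k y => DF0 k y t) (D2F0 := fun i j y => D2F0 i j y t)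
  (DFc := fun i k y => DFc i k y t) (Rinv_0_lt_compat _ (c_pos Ht0)) (s_ge0 t)
  (fun i x => pd_f0 x i Ht0) (fun i j x => pd_DF0 x i j Ht0)
  (fun i j x => vcont_at_of_jcont x (jcont_D2F0 i j) Ht0) (fun x v => f0_strong x v Ht0)
  (fun i k x => pd_fc i x k Ht0) (fun i k x => vcont_at_of_jcont x (jcont_DFc i k) Ht0)
  (fun i => fc_convex i Ht0) Hstat Hcs Hlam Hfeas
  Hzt (g := fun k => barrier_grad k (z t) t)
  (fun k => erefl).
have Hyoung := young_isum (fun k => barrier_grad k (z t) t) (fun k => z t k - xstar t k) m_pos.
have : sqnorm (fun k => barrier_grad k (z t) t) / (2 * m) <=
       sqnorm (fun k => barrier_grad k (z 1) 1) * exp (- (2 * sigma) * (t - 1)) / (2 * m).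
  by apply: Rmult_le_compat_r; [left; apply: Rinv_0_lt_compat; lra | exact: Hdecay].
lra.
Qed.

Hypotheses (c_unbounded : forall M, exists T, forall t, T <= t -> M < c t)
  (slack_multiplier_vanishes : forall i, vanishes (fun t => s t * Rabs (lam t i))).

Lemma tracking_error_vanishes e : 0 < e ->
  exists T, forall t, T <= t -> forall i, Rabs (z t i - xstar t i) < e.
Proof.
pose B := sqnorm (fun k => barrier_grad k (z 1) 1) / (2 * m).
have HB : 0 <= B.
  apply: Rmult_le_pos; last by left; apply: Rinv_0_lt_compat; lra.
  by apply: isum_ge0 => k; apply: Rle_0_sqr.
apply: vanishes_coords.
apply: (vanishes_le (T0 := 1) (g := fun t => 2 / m * (B * exp (- (2 * sigma) * (t - 1))
  + INR p * / c t + isum (fun i => s t * Rabs (lam t i))))).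
- move=> t Ht; have := tracking_error_bound Ht.
  have : s t * isum (lam t) <= isum (fun i => s t * Rabs (lam t i)).
    rewrite isum_mul_l; apply: Rmult_le_compat_l; first exact: s_ge0.
    by apply: isum_le => i; apply: Rle_abs.
  have EB : B * exp (- (2 * sigma) * (t - 1)) = sqnorm (fun k => barrier_grad k (z 1) 1)
      * exp (- (2 * sigma) * (t - 1)) / (2 * m) by rewrite /B /Rdiv; ring.
  move=> Hsl Hb; apply: (Rmult_le_reg_l (m / 2)); first lra.
  by rewrite -Rmult_assoc (_ : m / 2 * (2 / m) = 1) ?Rmult_1_l; [lra | field; lra].
- apply: vanishes_scal; first by apply: Rlt_le; apply: Rdiv_lt_0_compat; lra.
  apply: vanishes_plus; last exact: vanishes_isum.
  apply: vanishes_plus; first by apply: vanishes_scal (vanishes_exp _ _); lra.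
  exact: vanishes_scal (pos_INR p) (vanishes_inv c_unbounded).
Qed.

End BarrierFlow.

Lemma C2x_C1t_choice n p (fc : 'I_p -> vec n -> R -> R) : (forall i, C2x_C1t (fc i)) ->
  exists (DFc : 'I_p -> 'I_n -> vec n -> R -> R) (D2Fc : 'I_p -> 'I_n -> 'I_n -> vec n -> R -> R),
    (forall i x t k, 0 <= t -> pd (fun y => fc i y t) k x (DFc i k x t)) /\
    (forall i x t k j, 0 <= t -> pd (fun y => DFc i j y t) k x (D2Fc i k j x t)) /\
    (forall i, jcont (fc i)) /\ (forall i k, jcont (DFc i k)) /\
    (forall i k j, jcont (D2Fc i k j)).
Proof.
move=> H.
have [D HD] := functional_choice (fun i (q : ('I_n -> vec n -> R -> R) *
    ('I_n -> 'I_n -> vec n -> R -> R)) =>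
  (forall x t k, 0 <= t -> pd (fun y => fc i y t) k x (q.1 k x t)) /\
  (forall x t k j, 0 <= t -> pd (fun y => q.1 j y t) k x (q.2 k j x t)) /\
  jcont (fc i) /\ (forall k, jcont (q.1 k)) /\ (forall k j, jcont (q.2 k j)))
  (fun i => let: ex_intro DF (ex_intro D2 (ex_intro _ (conj h1 (conj h2 (conj _
      (conj h4 (conj h5 (conj h6 _)))))))) := H i in
    ex_intro _ (DF, D2) (conj h1 (conj h2 (conj h4 (conj h5 h6))))).
exists (fun i => (D i).1), (fun i => (D i).2).
by split; [|split; [|split; [|split]]] => i; have [? [? [? [? ?]]]] := HD i.
Qed.

Lemma initial_slack_ge0 p (a : 'I_p -> R) s0 eps : 0 < eps ->
  ((forall i, a i <= 0) -> s0 = 0) ->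
  ((exists i, 0 < a i) -> exists i, (forall j, a j <= a i) /\ s0 = a i + eps) ->
  0 <= s0.
Proof.
move=> Heps Hle Hgt.
case: (classic (forall i, a i <= 0)) => [H|/not_all_ex_not [i /Rnot_le_lt Hi]].
  by rewrite Hle //; lra.
have [j [Hj ->]] := Hgt (ex_intro _ i Hi).
by have := Hj i; lra.
Qed.

Lemma vanishes_slack_multiplier (l : R -> R) s0 alpha : 0 <= s0 ->
  (forall e, 0 < e -> exists T, forall t, T <= t -> Rabs (l t * exp (- alpha * t)) < e) ->
  vanishes (fun t => s0 * exp (- alpha * t) * Rabs (l t)).
Proof.
move=> Hs0 Hl; apply: (vanishes_le (T0 := 0) _ (vanishes_scal Hs0 Hl)) => t _.
rewrite Rabs_mult (Rabs_right (exp _)); last by apply: Rle_ge; left; apply: exp_pos.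
by right; ring.
Qed.

Theorem theorem1 (n p : nat)
  (f0 : vec n -> R -> R) (fc : 'I_p -> vec n -> R -> R)
  (H1a : C2x_C1t f0) (H1b : forall i, C2x_C1t (fc i))
  (m : R) (Hm : 0 < m)
  (Hstrong : forall t x H, 0 <= t -> hess (fun y => f0 y t) x H ->
     forall v, m * sqnorm v <= qform H v)
  (Hconv : forall i t, 0 <= t -> convex_fun (fun y => fc i y t))
  (Hslater : exists xd : vec n, forall i t, 0 <= t -> fc i xd t < 0)
  (xstar : R -> vec n)
  (Hxstar : forall t, 0 <= t -> is_argmin f0 fc t (xstar t))
  (HKKT : exists lam : R -> 'I_p -> R,
     (forall t, 0 <= t ->
        exists (g0 : vec n) (gs : 'I_p -> vec n),
          grad (fun y => f0 y t) (xstar t) g0 /\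
          (forall i, grad (fun y => fc i y t) (xstar t) (gs i)) /\
          (forall k, g0 k + isum (fun i => lam t i * gs i k) = 0) /\
          (forall i, lam t i * fc i (xstar t) t = 0) /\
          (forall i, 0 <= lam t i) /\
          (forall i, fc i (xstar t) t <= 0)) /\
     (forall a, 0 < a -> forall i e, 0 < e -> exists T, forall t, T <= t ->
        Rabs (lam t i * exp (- a * t)) < e))
  (x0 : vec n) (eps : R) (Heps : 0 < eps) (s0 : R)
  (Hs0a : (forall i, fc i x0 0 <= 0) -> s0 = 0)
  (Hs0b : (exists i, 0 < fc i x0 0) ->
     exists i, (forall j, fc j x0 0 <= fc i x0 0) /\ s0 = fc i x0 0 + eps)
  (alpha : R) (Halpha : 0 < alpha)
  (c : R -> R) (Hcpos : forall t, 0 <= t -> 0 < c t)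
  (Hc1 : exists c' : R -> R,
     (forall t, 0 < t -> derivable_pt_lim c t (c' t)) /\
     (forall t, 0 <= t -> forall e, 0 < e -> exists d, 0 < d /\
        forall u, 0 <= u -> Rabs (u - t) < d -> Rabs (c' u - c' t) < e))
  (Hcinf : forall M, exists T, forall t, T <= t -> M < c t)
  (P : 'I_n -> 'I_n -> R) (Psym : forall i j, P i j = P j i)
  (sigma : R) (Hsigma : 0 < sigma)
  (HP : forall v, sigma * sqnorm v <= qform P v)
  (z : R -> vec n)
  (Hz0 : forall i, z 0 i = x0 i)
  (Hzcont0 : forall i e, 0 < e -> exists d, 0 < d /\
     forall t, 0 <= t < d -> Rabs (z t i - x0 i) < e)
  (HzD : forall t, 0 <= t -> forall i,
     fc i (z t) t < s0 * exp (- alpha * t))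
  (Hode : forall t, 0 < t ->
     exists (zd g m' : vec n) (H : 'I_n -> 'I_n -> R),
       (forall i, derivable_pt_lim (fun u => z u i) t (zd i)) /\
       grad (fun y => Phit f0 fc c (fun u => s0 * exp (- alpha * u)) y t) (z t) g /\
       hess (fun y => Phit f0 fc c (fun u => s0 * exp (- alpha * u)) y t) (z t) H /\
       dxt (Phit f0 fc c (fun u => s0 * exp (- alpha * u))) (z t) t m' /\
       (forall i, isum (fun j => H i j * zd j)
                  = - (isum (fun j => P i j * g j) + m' i))) :
  forall e, 0 < e -> exists T, forall t, T <= t -> forall i,
    Rabs (z t i - xstar t i) < e.
Proof.
(* Slater's condition and the optimality of [xstar] enter only through the KKT
   multipliers of [HKKT]. *)
have [DF0 [D2F0 [_ [pd_f0 [pd_DF0 [_ [_ [_ [jcont_D2F0 _]]]]]]]]] := H1a.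
have [DFc [D2Fc [pd_fc [pd_DFc [jcont_fc [jcont_DFc jcont_D2Fc]]]]]] := C2x_C1t_choice H1b.
have [lam [Hlam_kkt Hlam_decay]] := HKKT.
have [c' [Hc' _]] := Hc1.
have s0_ge0 := initial_slack_ge0 Heps Hs0a Hs0b.
pose s u := s0 * exp (- alpha * u).
have z_dom t : 0 <= t -> in_domain fc s (z t) t by move=> Ht i; have := HzD t Ht i; rewrite /s; lra.
apply: (tracking_error_vanishes (s := s) pd_f0 pd_DF0 pd_fc pd_DFc jcont_D2F0 jcont_fc
  jcont_DFc jcont_D2Fc Hcpos (fun t Ht => derivable_pt_lim_continuity_pt (Hc' t Ht))
  (fun t => Rmult_le_pos _ _ s0_ge0 (Rlt_le _ _ (exp_pos _)))
  (fun t => derivable_pt_lim_continuity_pt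
     (derivable_pt_lim_scal _ s0 _ _ (derivable_pt_lim_exp_lin (- alpha) t)))
  z_dom Hode Hm Hsigma
  (fun t x v Ht => hess_lower_bound pd_f0 pd_DF0 Ht (fun H HH => Hstrong t x H Ht HH v))
  Hconv (fun t Ht => kkt_of_gradients pd_f0 pd_fc Ht (Hlam_kkt t Ht)) HP Hcinf
  (fun i => vanishes_slack_multiplier s0_ge0 (Hlam_decay alpha Halpha i))).
Qed.
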